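(* A commutative semigroup variety $\mathcal V$ equals $\mathcal C_m$ for some integer $m\ge0$ if and only if $\mathcal V$ is combinatorial and, for all commutative semigroup varieties $\mathcal Y,\mathcal Z$ with $\mathcal Y$ a nil-variety and $\mathcal V=\mathcal Y\vee\mathcal Z$, one has $\mathcal V=\mathcal Z$.
   Context: For $m\ge1$, $\mathcal C_m=\operatorname{var}\{x^m=x^{m+1},\ xy=yx\}$, the variety generated by the cyclic monoid $\langle a\mid a^m=a^{m+1}\rangle$; $\mathcal C_0$ is the trivial variety. A semigroup variety is combinatorial if all groups in it are trivial; it is a nil-variety if all its semigroups are nil-semigroups. Joins are in the lattice of commutative semigroup varieties. *)

From Stdlib Require Import List Arith.
Import ListNotations.

Record semigroup := Semigroup {
  carrier :> Type;
  sg_op : carrier -> carrier -> carrier;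
  sg_assoc : forall x y z, sg_op x (sg_op y z) = sg_op (sg_op x y) z;
  sg_inh : carrier
}.

Definition commutative_sg (S : semigroup) : Prop :=
  forall x y : S, sg_op S x y = sg_op S y x.

(* A semigroup word over variables x_0, x_1, ...: a nonempty list of
   variables, represented as (first letter, remaining letters). *)
Definition word := (nat * list nat)%type.
Definition identity := (word * word)%type.

Definition eval_word (S : semigroup) (f : nat -> S) (w : word) : S :=
  fold_left (fun acc i => sg_op S acc (f i)) (snd w) (f (fst w)).

Definition satisfies (S : semigroup) (e : identity) : Prop :=
  forall f : nat -> S, eval_word S f (fst e) = eval_word S f (snd e).

(* A commutative semigroup variety is given by a set of defining identities
   (together with xy = yx, which is built into membership). *)
Definition cvariety := identity -> Prop.

Definition inV (V : cvariety) (S : semigroup) : Prop :=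
  commutative_sg S /\ forall e, V e -> satisfies S e.

Definition veq (V W : cvariety) : Prop :=
  forall S : semigroup, inV V S <-> inV W S.

(* Join in the lattice of commutative semigroup varieties: the variety
   defined by all identities holding in both (= var(Y u Z), by Birkhoff). *)
Definition vjoin (Y Z : cvariety) : cvariety :=
  fun e => (forall S, inV Y S -> satisfies S e) /\ (forall S, inV Z S -> satisfies S e).

(* x^n as a word: x_0 repeated n times (n >= 1). *)
Definition xpow (n : nat) : word := (0, repeat 0 (n - 1)).

(* C_m = var{x^m = x^{m+1}, xy = yx} for m >= 1; C_0 = trivial variety (x = y). *)
Definition Cvar (m : nat) : cvariety :=
  fun e => match m with
           | 0 => e = ((0, []), (1, []))
           | _ => e = (xpow m, xpow (Datatypes.S m))
           end.

Definition is_group (S : semigroup) : Prop :=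
  exists u : S, (forall x : S, sg_op S u x = x /\ sg_op S x u = x) /\
    (forall x : S, exists y : S, sg_op S x y = u /\ sg_op S y x = u).

Definition trivial_sg (S : semigroup) : Prop := forall x y : S, x = y.

Definition combinatorial (V : cvariety) : Prop :=
  forall S, inV V S -> is_group S -> trivial_sg S.

(* x^n for n >= 1: spow S x n = x^(n+1) *)
Fixpoint spow (T : semigroup) (x : T) (n : nat) : T :=
  match n with
  | 0 => x
  | Datatypes.S k => sg_op T (spow T x k) x
  end.

Definition nil_sg (S : semigroup) : Prop :=
  exists z : S, (forall x : S, sg_op S z x = z /\ sg_op S x z = z) /\
    (forall x : S, exists n, spow S x n = z).

Definition nil_variety (V : cvariety) : Prop := forall S, inV V S -> nil_sg S.

From Stdlib Require Import List Arith Lia ZArith Classical ClassicalEpsilon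
  FunctionalExtensionality ProofIrrelevance.
Import ListNotations.

(* A combinatorial V satisfies x^(m+1) = x^(m+2) for some m: an identity of V
   with unbalanced letter counts yields x^A = x^B with A <> B, and the cyclic
   group at the tail of every monogenic subsemigroup must then be trivial.
   Let k be such that the cyclic monoid N_k = <a | a^k = a^(k+1)> lies in V but
   N_(k+1) does not; then f s^k = f s^(k+1) for every idempotent f of a member
   of V. Let Y be the nil subvariety of V defined by x^(m+1) y = x^(m+1). An
   element of S in V is determined by its image in the Rees quotient of S by
   the ideal generated by the idempotents, which lies in Y, together with its
   products with idempotents, which are controlled by C_k; hence V = Y v C_k
   and the hypothesis gives V = C_k.
   Conversely, if V = C_m = Y v Z with Y nil, say x^n y = x^n in Y, then for
   every identity u = v of Z the identity u z^n = v z^n holds in Y and in Z,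
   hence in C_m; choosing z distinct from x_i shows that u and v have the same
   x_i-count truncated at m, so u = v holds in C_m. *)

Definition letters (w : word) : list nat := fst w :: snd w.
Definition occ (w : word) (i : nat) : nat := count_occ Nat.eq_dec (letters w) i.
Definition word_app (u t : word) : word := (fst u, snd u ++ letters t).

Lemma sig_ext {A : Type} {P : A -> Prop} (a b : {x | P x}) :
  proj1_sig a = proj1_sig b -> a = b.
Proof. apply eq_sig_hprop. intros; apply proof_irrelevance. Qed.

Section AdjoinedIdentity.
Variable T : semigroup.

(* The monoid T^1, with [None] as the adjoined identity. *)
Definition mul1 (a b : option T) : option T :=
  match a, b with
  | None, _ => b
  | _, None => a
  | Some x, Some y => Some (sg_op T x y)
  end.

Lemma mul1_assoc a b c : mul1 a (mul1 b c) = mul1 (mul1 a b) c.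
Proof. destruct a, b, c; simpl; auto. f_equal; apply sg_assoc. Qed.

Lemma mul1_1l a : mul1 None a = a.
Proof. reflexivity. Qed.

Lemma mul1_1r a : mul1 a None = a.
Proof. destruct a; reflexivity. Qed.

Lemma mul1_Some x y : mul1 (Some x) (Some y) = Some (sg_op T x y).
Proof. reflexivity. Qed.

Arguments mul1 : simpl never.

Definition pow1 (g : T) (n : nat) : option T :=
  match n with 0 => None | S n' => Some (spow T g n') end.

Lemma pow1_succ g n : pow1 g (S n) = mul1 (pow1 g n) (Some g).
Proof. destruct n; reflexivity. Qed.

Lemma pow1_add g a b : pow1 g (a + b) = mul1 (pow1 g a) (pow1 g b).
Proof.
  induction b as [|b IHb].
  - rewrite Nat.add_0_r, mul1_1r. reflexivity.
  - rewrite Nat.add_succ_r, !pow1_succ, IHb, mul1_assoc. reflexivity.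
Qed.

Lemma mul1_idempotent_pow1 f n : sg_op T f f = f -> mul1 (Some f) (pow1 f n) = Some f.
Proof.
  intros Hf. induction n as [|n IHn]; [apply mul1_1r|].
  rewrite pow1_succ, mul1_assoc, IHn, mul1_Some, Hf. reflexivity.
Qed.

Lemma mul1_pow1_stable t s a :
  mul1 t (pow1 s a) = mul1 t (pow1 s (S a)) ->
  forall c, a <= c -> mul1 t (pow1 s c) = mul1 t (pow1 s a).
Proof.
  intros H c Hc. induction Hc as [|c _ IHc]; [reflexivity|].
  rewrite pow1_succ, mul1_assoc, IHc, <- mul1_assoc, <- pow1_succ. symmetry; exact H.
Qed.

Lemma pow1_stable s a : pow1 s a = pow1 s (S a) -> forall c, a <= c -> pow1 s c = pow1 s a.
Proof. exact (mul1_pow1_stable None s a). Qed.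

(* The sequence n |-> t s^n is ultimately constant; once it repeats a value it is
   periodic, and a periodic, ultimately constant sequence is constant. *)
Lemma mul1_pow1_eq_stable t s m a b : pow1 s m = pow1 s (S m) -> a < b ->
  mul1 t (pow1 s a) = mul1 t (pow1 s b) -> mul1 t (pow1 s a) = mul1 t (pow1 s (S a)).
Proof.
  intros Hm Hab E.
  set (F n := mul1 t (pow1 s n)).
  assert (Hshift : forall c, F (a + c) = F (b + c)).
  { intros c. unfold F. rewrite !pow1_add, !mul1_assoc, E. reflexivity. }
  assert (Hper : forall n c, F (a + c) = F (a + c + n * (b - a))).
  { intros n c. induction n as [|n IHn]; [f_equal; lia|].
    rewrite IHn. replace (a + c + S n * (b - a)) with (b + (c + n * (b - a))) by lia.
    rewrite <- Hshift. f_equal; lia. }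
  assert (Hlate : forall n, m <= n -> F n = F (S n)).
  { intros n Hn. unfold F.
    rewrite (pow1_stable s m Hm n Hn), (pow1_stable s m Hm (S n)) by lia. reflexivity. }
  change (F a = F (S a)).
  rewrite <- (Nat.add_0_r a) at 1. rewrite (Hper m 0).
  replace (S a) with (a + 1) by lia. rewrite (Hper m 1).
  replace (a + 1 + m * (b - a)) with (S (a + 0 + m * (b - a))) by lia.
  apply Hlate. nia.
Qed.

Lemma mul1_pow1_eq_min t s m k a b : pow1 s m = pow1 s (S m) ->
  mul1 t (pow1 s k) <> mul1 t (pow1 s (S k)) ->
  mul1 t (pow1 s a) = mul1 t (pow1 s b) -> Nat.min a (S k) = Nat.min b (S k).
Proof.
  intros Hm Hk.
  enough (H : forall a b, a < b -> mul1 t (pow1 s a) = mul1 t (pow1 s b) ->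
                 Nat.min a (S k) = Nat.min b (S k)).
  { intros E. destruct (Nat.lt_total a b) as [Hab|[->|Hab]]; auto.
    symmetry. apply H; auto. }
  intros a' b' Hab E. destruct (Nat.le_gt_cases (S k) a'); [lia|].
  exfalso. apply Hk.
  assert (Hst := mul1_pow1_stable t s a' (mul1_pow1_eq_stable t s m a' b' Hm Hab E)).
  rewrite (Hst k), (Hst (S k)) by lia. reflexivity.
Qed.

Definition prod1 (f : nat -> T) (l : list nat) : option T :=
  fold_right (fun i r => mul1 (Some (f i)) r) None l.

Lemma fold_left_mul f l a :
  Some (fold_left (fun acc i => sg_op T acc (f i)) l a) = mul1 (Some a) (prod1 f l).
Proof.
  revert a; induction l as [|i l IHl]; intros a; [reflexivity|].
  cbn [fold_left]. rewrite IHl. unfold prod1; cbn [fold_right].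
  rewrite mul1_assoc. reflexivity.
Qed.

Lemma eval_word_prod1 f w : Some (eval_word T f w) = prod1 f (letters w).
Proof. unfold eval_word, letters. rewrite fold_left_mul. reflexivity. Qed.

Lemma prod1_app f l1 l2 : prod1 f (l1 ++ l2) = mul1 (prod1 f l1) (prod1 f l2).
Proof.
  induction l1 as [|i l1 IHl1]; [reflexivity|].
  unfold prod1 in *; simpl. rewrite IHl1, mul1_assoc. reflexivity.
Qed.

Fixpoint prod_counts (g : nat -> T) (c : nat -> nat) (N : nat) : option T :=
  match N with
  | 0 => None
  | S N' => mul1 (prod_counts g c N') (pow1 (g N') (c N'))
  end.

Lemma prod_counts_ext g c c' N :
  (forall i, i < N -> c i = c' i) -> prod_counts g c N = prod_counts g c' N.
Proof.
  induction N as [|N IHN]; intros H; simpl; auto.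
  rewrite IHN, H by (auto; intros; apply H; lia). reflexivity.
Qed.

Hypothesis Tcomm : commutative_sg T.

Lemma mul1_comm a b : mul1 a b = mul1 b a.
Proof. destruct a, b; unfold mul1; auto. f_equal; apply Tcomm. Qed.

Lemma prod_counts_incr g c c' x N : x < N -> c' x = S (c x) ->
  (forall i, i <> x -> c' i = c i) ->
  prod_counts g c' N = mul1 (Some (g x)) (prod_counts g c N).
Proof.
  induction N as [|N IHN]; intros Hx H1 H2; [lia|].
  simpl. destruct (Nat.eq_dec x N) as [->|Hne].
  - rewrite (prod_counts_ext g c' c) by (intros; apply H2; lia).
    rewrite H1, pow1_succ, (mul1_comm (pow1 _ _) (Some _)), !mul1_assoc,
      (mul1_comm _ (Some _)).
    reflexivity.
  - rewrite IHN, H2, mul1_assoc by (auto; lia). reflexivity.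
Qed.

Lemma prod1_prod_counts g l N : Forall (fun x => x < N) l ->
  prod1 g l = prod_counts g (count_occ Nat.eq_dec l) N.
Proof.
  induction l as [|x l IHl]; intros H; simpl.
  - induction N as [|N IHN]; [reflexivity|]. simpl. rewrite <- IHN by constructor.
    reflexivity.
  - inversion H; subst. rewrite IHl by auto.
    symmetry. apply prod_counts_incr; auto.
    + destruct (Nat.eq_dec x x); [reflexivity|congruence].
    + intros i Hi. destruct (Nat.eq_dec x i); [congruence|reflexivity].
Qed.

Lemma mul1_prod_counts_congr g a b t N :
  (forall i, i < N -> mul1 t (pow1 (g i) (a i)) = mul1 t (pow1 (g i) (b i))) ->
  mul1 t (prod_counts g a N) = mul1 t (prod_counts g b N).
Proof.
  induction N as [|N IHN]; intros H; simpl; auto.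
  rewrite !mul1_assoc, IHN by (intros; apply H; lia).
  rewrite <- !mul1_assoc, (mul1_comm (prod_counts _ _ _)), !mul1_assoc, H by lia.
  rewrite <- !mul1_assoc, (mul1_comm (pow1 _ _) (prod_counts _ _ _)). reflexivity.
Qed.

Lemma mul1_prod_counts_absorb g c t N :
  (forall i, i < N -> mul1 t (pow1 (g i) (c i)) = t) -> mul1 t (prod_counts g c N) = t.
Proof.
  induction N as [|N IHN]; intros H; simpl; [apply mul1_1r|].
  rewrite mul1_assoc, IHN by (intros; apply H; lia). apply H; lia.
Qed.

Lemma mul1_prod_counts_single g c t N i : i < N ->
  (forall j, j < N -> j <> i -> mul1 t (pow1 (g j) (c j)) = t) ->
  mul1 t (prod_counts g c N) = mul1 t (pow1 (g i) (c i)).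
Proof.
  induction N as [|N IHN]; intros Hi H; simpl; [lia|].
  destruct (Nat.eq_dec i N) as [->|Hne].
  - rewrite mul1_assoc, mul1_prod_counts_absorb; auto.
    intros; apply H; lia.
  - rewrite mul1_assoc, IHN by (auto; try lia; intros; apply H; lia).
    rewrite <- mul1_assoc, (mul1_comm (pow1 _ _)), mul1_assoc, H by lia. reflexivity.
Qed.

Lemma eval_word_prod_counts g w N : list_max (letters w) < N ->
  Some (eval_word T g w) = prod_counts g (occ w) N.
Proof.
  intros HN. rewrite eval_word_prod1. apply prod1_prod_counts.
  apply list_max_lt; [discriminate|exact HN].
Qed.

Lemma mul1_eval_word_congr (g : nat -> T) u v t :
  (forall i, mul1 t (pow1 (g i) (occ u i)) = mul1 t (pow1 (g i) (occ v i))) ->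
  mul1 t (Some (eval_word T g u)) = mul1 t (Some (eval_word T g v)).
Proof.
  intros H. set (N := S (list_max (letters u) + list_max (letters v))).
  rewrite (eval_word_prod_counts g u N), (eval_word_prod_counts g v N) by (unfold N; lia).
  apply mul1_prod_counts_congr. intros i _; apply H.
Qed.

Lemma mul1_eval_word_idempotent f s i w : sg_op T f f = f ->
  mul1 (Some f) (Some (eval_word T (fun x => if Nat.eq_dec x i then s else f) w)) =
  mul1 (Some f) (pow1 s (occ w i)).
Proof.
  intros Hf. set (N := S (i + list_max (letters w))).
  rewrite (eval_word_prod_counts _ w N) by (unfold N; lia).
  rewrite (mul1_prod_counts_single _ _ _ N i).
  - destruct (Nat.eq_dec i i); [reflexivity|congruence].
  - unfold N; lia.
  - intros j _ Hj. destruct (Nat.eq_dec j i); [congruence|].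
    apply mul1_idempotent_pow1, Hf.
Qed.

Lemma idempotent_mul_eval_congr k u v :
  (forall f s : T, sg_op T f f = f ->
     mul1 (Some f) (pow1 s k) = mul1 (Some f) (pow1 s (S k))) ->
  (forall i, Nat.min (occ u i) k = Nat.min (occ v i) k) ->
  forall (h : nat -> T) f, sg_op T f f = f ->
  sg_op T f (eval_word T h u) = sg_op T f (eval_word T h v).
Proof.
  intros Hk Hmin h f Hf.
  assert (E : mul1 (Some f) (Some (eval_word T h u)) = mul1 (Some f) (Some (eval_word T h v))).
  { apply mul1_eval_word_congr. intros i.
    destruct (Nat.eq_dec (occ u i) (occ v i)) as [->|Hne]; [reflexivity|].
    assert (Hst := mul1_pow1_stable (Some f) (h i) k (Hk f (h i) Hf)).
    specialize (Hmin i). rewrite (Hst (occ u i)), (Hst (occ v i)) by lia. reflexivity. }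
  rewrite !mul1_Some in E. now injection E.
Qed.

End AdjoinedIdentity.

Arguments mul1 {T} : simpl never.
Arguments pow1 {T}.

Definition pow_stable (T : semigroup) (j : nat) : Prop :=
  forall g : T, pow1 g j = pow1 g (S j).

Lemma eval_word_pow (T : semigroup) (f : nat -> T) k n :
  eval_word T f (k, repeat k n) = spow T (f k) n.
Proof.
  unfold eval_word; cbn [fst snd].
  enough (H : forall a, fold_left (fun acc i => sg_op T acc (f i)) (repeat k n)
                          (spow T (f k) a) = spow T (f k) (a + n)) by exact (H 0).
  induction n as [|n IHn]; intros a; cbn [repeat fold_left]; [f_equal; lia|].
  change (sg_op T (spow T (f k) a) (f k)) with (spow T (f k) (S a)).
  rewrite IHn. f_equal; lia.
Qed.

Lemma eval_word_app (T : semigroup) f u t :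
  eval_word T f (word_app u t) = sg_op T (eval_word T f u) (eval_word T f t).
Proof.
  assert (E : Some (eval_word T f (word_app u t)) =
              Some (sg_op T (eval_word T f u) (eval_word T f t))).
  { rewrite <- mul1_Some, !eval_word_prod1.
    change (letters (word_app u t)) with (letters u ++ letters t).
    apply prod1_app. }
  now injection E.
Qed.

Lemma occ_word_app u t i : occ (word_app u t) i = occ u i + occ t i.
Proof. exact (count_occ_app _ (letters u) (letters t) i). Qed.

Lemma occ_pow_other k n i : i <> k -> occ (k, repeat k n) i = 0.
Proof.
  intros H. unfold occ, letters; cbn [fst snd].
  rewrite count_occ_cons_neq by auto. apply count_occ_not_In.
  intros Hin. apply repeat_spec in Hin. congruence.
Qed.

Lemma inV_trivial (V : cvariety) (T : semigroup) : trivial_sg T -> inV V T.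
Proof. intros H. split; [intros x y; apply H|]. intros e _ f; apply H. Qed.

Lemma Cvar0_trivial (T : semigroup) : inV (Cvar 0) T -> trivial_sg T.
Proof.
  intros [_ H] x y. exact (H _ eq_refl (fun i => match i with 0 => x | _ => y end)).
Qed.

Lemma inV_Cvar_succ (T : semigroup) j :
  inV (Cvar (S j)) T <-> commutative_sg T /\ pow_stable T (S j).
Proof.
  unfold inV, Cvar, xpow. split.
  - intros [Hc H]. split; [exact Hc|]. intros g.
    specialize (H _ eq_refl (fun _ => g)). cbn [fst snd] in H.
    rewrite !eval_word_pow in H. simpl in H |- *. rewrite Nat.sub_0_r in H.
    f_equal; exact H.
  - intros [Hc H]. split; [exact Hc|]. intros e -> f. cbn [fst snd].
    rewrite !eval_word_pow. specialize (H (f 0)). simpl in H |- *.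
    rewrite Nat.sub_0_r. now injection H.
Qed.

(* The cyclic monoid <a | a^j = a^(j+1)>, with a^n represented by min n j. *)
Definition capped (j : nat) : Type := {n : nat | n <= j}.

Definition capped_add j (a b : capped j) : capped j :=
  exist _ (Nat.min (proj1_sig a + proj1_sig b) j) (Nat.le_min_r _ _).

Lemma capped_add_assoc j (a b c : capped j) :
  capped_add j a (capped_add j b c) = capped_add j (capped_add j a b) c.
Proof. apply sig_ext. destruct a, b, c; simpl; lia. Qed.

Definition cyclic_monoid (j : nat) : semigroup :=
  Semigroup (capped j) (capped_add j) (capped_add_assoc j) (exist _ 0 (Nat.le_0_l j)).

Lemma cyclic_monoid_comm j : commutative_sg (cyclic_monoid j).
Proof. intros a b. apply sig_ext. simpl. lia. Qed.

Lemma cyclic_monoid_eval j (f : nat -> cyclic_monoid j) w :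
  proj1_sig (eval_word (cyclic_monoid j) f w) =
  Nat.min (list_sum (map (fun i => proj1_sig (f i)) (letters w))) j.
Proof.
  unfold eval_word, letters; cbn [fst snd].
  enough (H : forall l (a : cyclic_monoid j),
    proj1_sig (fold_left (fun acc i => sg_op _ acc (f i)) l a) =
    Nat.min (proj1_sig a + list_sum (map (fun i => proj1_sig (f i)) l)) j) by apply H.
  induction l as [|x l IHl]; intros [a Ha]; simpl; [lia|].
  rewrite IHl. simpl. lia.
Qed.

Lemma cyclic_monoid_spow j (g : cyclic_monoid j) n :
  proj1_sig (spow _ g n) = Nat.min (S n * proj1_sig g) j.
Proof.
  induction n as [|n IHn]; simpl; [destruct g; simpl; lia|].
  rewrite IHn. destruct g as [x Hx]; simpl. nia.
Qed.

Lemma cyclic_monoid_pow_stable j : pow_stable (cyclic_monoid (S j)) (S j).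
Proof.
  intros g. simpl. f_equal. apply sig_ext.
  change (proj1_sig (spow _ g j) = proj1_sig (spow _ g (S j))).
  rewrite !cyclic_monoid_spow. destruct g as [[|x] Hx]; simpl; nia.
Qed.

Lemma cyclic_monoid_not_pow_stable m : ~ pow_stable (cyclic_monoid (S (S m))) (S m).
Proof.
  intros H.
  set (g := exist _ 1 (le_n_S 0 _ (Nat.le_0_l (S m))) : cyclic_monoid (S (S m))).
  assert (E : proj1_sig (spow _ g m) = proj1_sig (spow _ g (S m))).
  { specialize (H g). simpl in H. now injection H as ->. }
  rewrite !cyclic_monoid_spow in E. simpl in E. lia.
Qed.

Lemma cyclic_monoid0_trivial : trivial_sg (cyclic_monoid 0).
Proof. intros a b. apply sig_ext. destruct a, b; simpl; lia. Qed.

Lemma cyclic_monoid_in_Cvar j : inV (Cvar j) (cyclic_monoid j).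
Proof.
  destruct j as [|j].
  - apply inV_trivial, cyclic_monoid0_trivial.
  - apply inV_Cvar_succ. split; [apply cyclic_monoid_comm|apply cyclic_monoid_pow_stable].
Qed.

Lemma occ_min_of_cyclic_monoid j u v : satisfies (cyclic_monoid j) (u, v) ->
  forall i, Nat.min (occ u i) j = Nat.min (occ v i) j.
Proof.
  intros H i. destruct j as [|j]; [lia|].
  set (ind x := exist (fun n => n <= S j)
                  (Nat.min (if Nat.eq_dec x i then 1 else 0) (S j)) (Nat.le_min_r _ _)).
  assert (Hsum : forall l, list_sum (map (fun x => proj1_sig (ind x)) l) =
                           count_occ Nat.eq_dec l i).
  { induction l as [|x l IHl]; [reflexivity|]. simpl in IHl |- *.
    rewrite IHl. destruct (Nat.eq_dec x i); lia. }
  specialize (H ind). apply (f_equal (@proj1_sig _ _)) in H.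
  rewrite !cyclic_monoid_eval, !Hsum in H. exact H.
Qed.

Lemma Cvar_satisfies_iff j u v :
  (forall T, inV (Cvar j) T -> satisfies T (u, v)) <->
  (forall i, Nat.min (occ u i) j = Nat.min (occ v i) j).
Proof.
  split.
  - intros H. apply occ_min_of_cyclic_monoid, H, cyclic_monoid_in_Cvar.
  - intros Hmin T HT f. destruct j as [|j]; [apply Cvar0_trivial, HT|].
    apply inV_Cvar_succ in HT as [Hc Hst].
    enough (E : mul1 None (Some (eval_word T f u)) = mul1 None (Some (eval_word T f v)))
      by now injection E.
    apply mul1_eval_word_congr; [exact Hc|]. intros i. rewrite !mul1_1l.
    specialize (Hmin i). destruct (Nat.lt_ge_cases (occ u i) (S j)).
    + replace (occ v i) with (occ u i) by lia. reflexivity.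
    + rewrite (pow1_stable T (f i) (S j) (Hst _) (occ u i)),
        (pow1_stable T (f i) (S j) (Hst _) (occ v i)) by lia.
      reflexivity.
Qed.

Section Product.
Variable F : nat -> semigroup.

Definition product_op (a b : forall i, F i) : forall i, F i :=
  fun i => sg_op (F i) (a i) (b i).

Lemma product_op_assoc a b c : product_op a (product_op b c) = product_op (product_op a b) c.
Proof. apply functional_extensionality_dep; intros i. apply sg_assoc. Qed.

Definition product_sg : semigroup :=
  Semigroup (forall i, F i) product_op product_op_assoc (fun i => sg_inh (F i)).

Lemma product_eval (h : nat -> product_sg) w i :
  eval_word product_sg h w i = eval_word (F i) (fun x => h x i) w.
Proof.
  unfold eval_word. generalize (h (fst w)) as a.
  induction (snd w) as [|x l IHl]; intros a; simpl; auto.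
Qed.

Lemma product_spow (x : product_sg) n i : spow product_sg x n i = spow (F i) (x i) n.
Proof. induction n as [|n IHn]; simpl; auto. unfold product_op. rewrite IHn. reflexivity. Qed.

Lemma inV_product V : (forall i, inV V (F i)) -> inV V product_sg.
Proof.
  intros H. split.
  - intros a b. apply functional_extensionality_dep; intros i. apply (proj1 (H i)).
  - intros e He h. apply functional_extensionality_dep; intros i.
    rewrite !product_eval. apply (proj2 (H i) e He).
Qed.

End Product.

(* Otherwise a product of counterexamples for larger and larger n would lie in Y
   without being nil. *)
Lemma nil_variety_uniform_index Y : nil_variety Y ->
  exists n, forall T, inV Y T -> forall x y : T, sg_op T (spow T x n) y = spow T x n.
Proof.
  intros HY. apply NNPP; intros Hnone.
  assert (Hbad : forall n, exists p : {T : semigroup & (T * T)%type},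
    inV Y (projT1 p) /\
    sg_op _ (spow _ (fst (projT2 p)) n) (snd (projT2 p)) <> spow _ (fst (projT2 p)) n).
  { intros n. apply NNPP; intros H. apply Hnone. exists n. intros T HT x y.
    apply NNPP; intros Hne. apply H. exists (existT _ T (x, y)). auto. }
  destruct (choice _ Hbad) as [p Hp].
  set (F n := projT1 (p n)).
  assert (HP : inV Y (product_sg F)) by (apply inV_product; intros n; apply Hp).
  destruct (HY _ HP) as [z [Hz Hpow]].
  destruct (Hpow (fun n => fst (projT2 (p n)))) as [k Hk].
  apply (proj2 (Hp k)).
  assert (E := f_equal (fun a => a k) (proj1 (Hz (fun n => snd (projT2 (p n)))))).
  simpl in E. unfold product_op in E. rewrite <- Hk, product_spow in E. exact E.
Qed.

Lemma Cvar_combinatorial m : combinatorial (Cvar m).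
Proof.
  intros T HT [e [He Hinv]]. destruct m as [|m]; [exact (Cvar0_trivial T HT)|].
  apply inV_Cvar_succ in HT as [Hc Hst].
  assert (Hall : forall g, g = e).
  { intros g. specialize (Hst g). simpl in Hst. injection Hst as Hg.
    destruct (Hinv (spow T g m)) as [y [Hy _]].
    rewrite <- Hy. rewrite Hg at 1.
    rewrite <- sg_assoc, (Hc g y), sg_assoc, Hy. symmetry; apply He. }
  intros x y. rewrite (Hall x), (Hall y). reflexivity.
Qed.

Lemma join_nil_Cvar V m Y Z :
  veq V (Cvar m) -> nil_variety Y -> veq V (vjoin Y Z) -> veq V Z.
Proof.
  intros HV HY HJ T. split.
  - intros HT. split; [exact (proj1 HT)|]. intros [u v] He.
    apply (proj2 (Cvar_satisfies_iff m u v)); [|apply HV, HT].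
    intros i. destruct (nil_variety_uniform_index Y HY) as [n Hn].
    set (t := (S i, repeat (S i) n) : word).
    assert (Hjoin : forall R, inV (Cvar m) R -> satisfies R (word_app u t, word_app v t)).
    { intros R HR. apply (proj2 (proj1 (HJ R) (proj2 (HV R) HR))). split.
      - intros R' HR' f. cbn [fst snd]. rewrite !eval_word_app. unfold t.
        rewrite eval_word_pow, !(proj1 HR' _ (spow R' _ n)), !Hn; auto.
      - intros R' HR' f. cbn [fst snd]. rewrite !eval_word_app. f_equal.
        exact (proj2 HR' _ He f). }
    assert (E := proj1 (Cvar_satisfies_iff m _ _) Hjoin i).
    rewrite !occ_word_app in E. unfold t in E.
    rewrite !occ_pow_other, !Nat.add_0_r in E by lia. exact E.
  - intros HZ. apply HJ. split; [exact (proj1 HZ)|]. intros e [_ He]. exact (He T HZ).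
Qed.

Definition int_add_sg : semigroup := Semigroup Z Z.add Z.add_assoc 0%Z.

Lemma exists_unbalanced_identity V : combinatorial V ->
  exists u v i, V (u, v) /\ occ u i <> occ v i.
Proof.
  intros Hcomb. apply NNPP; intros Hbal.
  assert (Hc : commutative_sg int_add_sg) by (intros x y; apply Z.add_comm).
  assert (HZ : inV V int_add_sg).
  { split; [exact Hc|]. intros [u v] He f. cbn [fst snd].
    enough (E : mul1 None (Some (eval_word _ f u)) = mul1 None (Some (eval_word _ f v)))
      by now injection E.
    apply mul1_eval_word_congr; [exact Hc|]. intros i.
    replace (occ v i) with (occ u i); [reflexivity|].
    apply NNPP; intros Hne. apply Hbal. eauto. }
  assert (Hgrp : is_group int_add_sg).
  { exists 0%Z. split; [intros x; simpl; split; lia|].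
    intros x. exists (- x)%Z. simpl; split; lia. }
  discriminate (Hcomb _ HZ Hgrp 0%Z 1%Z).
Qed.

Lemma spow_mul (T : semigroup) (g : T) a b :
  sg_op T (spow T g a) (spow T g b) = spow T g (S (a + b)).
Proof.
  induction b as [|b IHb]; simpl; [rewrite Nat.add_0_r; reflexivity|].
  rewrite sg_assoc, IHb, Nat.add_succ_r. reflexivity.
Qed.

Lemma eval_word_spow (T : semigroup) (g : T) c w :
  eval_word T (fun x => spow T g (c x)) w =
  spow T g (length (snd w) + list_sum (map c (letters w))).
Proof.
  unfold eval_word, letters. cbn [fst snd map].
  enough (H : forall l a, fold_left (fun acc x => sg_op T acc (spow T g (c x))) l (spow T g a)
                          = spow T g (a + length l + list_sum (map c l))).
  { rewrite H. f_equal. simpl. lia. }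
  induction l as [|x l IHl]; intros a; simpl; [f_equal; lia|].
  rewrite spow_mul, IHl. f_equal. simpl in IHl |- *. lia.
Qed.

(* Substituting powers of a single x: all letters by x, or x_i by x^2 and the others by x. *)
Lemma unbalanced_spow u v i : occ u i <> occ v i ->
  exists A B, A <> B /\ forall T, satisfies T (u, v) -> forall g : T, spow T g A = spow T g B.
Proof.
  intros Hne.
  set (ind x := if Nat.eq_dec x i then 1 else 0).
  assert (Hind : forall w, list_sum (map ind (letters w)) = occ w i).
  { intros w. unfold occ. induction (letters w) as [|x l IHl]; [reflexivity|].
    simpl in IHl |- *. rewrite IHl. unfold ind. destruct (Nat.eq_dec x i); lia. }
  assert (Hzero : forall w, list_sum (map (fun _ => 0) (letters w)) = 0).
  { intros w. induction (letters w) as [|x l IHl]; [reflexivity|]. exact IHl. }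
  destruct (Nat.eq_dec (length (snd u)) (length (snd v))) as [Hl|Hl].
  - exists (length (snd u) + occ u i), (length (snd v) + occ v i). split; [lia|].
    intros T HT g. specialize (HT (fun x => spow T g (ind x))). cbn [fst snd] in HT.
    rewrite !eval_word_spow, !Hind in HT. exact HT.
  - exists (length (snd u)), (length (snd v)). split; [exact Hl|].
    intros T HT g. specialize (HT (fun x => spow T g ((fun _ => 0) x))). cbn [fst snd] in HT.
    rewrite !eval_word_spow, !Hzero, !Nat.add_0_r in HT. exact HT.
Qed.

Section Subsemigroup.
Variables (T : semigroup) (P : T -> Prop).
Hypothesis P_mul : forall x y, P x -> P y -> P (sg_op T x y).
Variable x0 : T.
Hypothesis P_x0 : P x0.

Definition sub_op (a b : {x | P x}) : {x | P x} :=
  exist _ (sg_op T (proj1_sig a) (proj1_sig b)) (P_mul _ _ (proj2_sig a) (proj2_sig b)).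

Lemma sub_op_assoc a b c : sub_op a (sub_op b c) = sub_op (sub_op a b) c.
Proof. apply sig_ext; simpl. apply sg_assoc. Qed.

Definition sub_sg : semigroup := Semigroup {x | P x} sub_op sub_op_assoc (exist _ x0 P_x0).

Lemma inV_sub_sg V : inV V T -> inV V sub_sg.
Proof.
  intros [Hc H]. split.
  - intros a b. apply sig_ext. apply Hc.
  - intros e He h. apply sig_ext. unfold eval_word.
    enough (Hfold : forall l a, proj1_sig (fold_left (fun acc x => sg_op sub_sg acc (h x)) l a) =
                               fold_left (fun acc x => sg_op T acc (proj1_sig (h x))) l (proj1_sig a))
      by (rewrite !Hfold; apply (H e He)).
    induction l as [|x l IHl]; intros a; simpl; auto.
Qed.

End Subsemigroup.

(* The powers g^n, n > A, form a group once g^(A+1) = g^(A+d+2). *)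
Section PowerTail.
Variables (T : semigroup) (g : T) (A d : nat).
Hypothesis Tcomm : commutative_sg T.
Hypothesis g_periodic : pow1 g (S A) = pow1 g (S A + S d).

Lemma pow1_periodic n k : S A <= n -> pow1 g (n + k * S d) = pow1 g n.
Proof.
  intros Hn.
  assert (Hstep : forall m, S A <= m -> pow1 g (m + S d) = pow1 g m).
  { intros m Hm. replace (m + S d) with ((m - S A) + (S A + S d)) by lia.
    rewrite pow1_add, <- g_periodic, <- pow1_add. f_equal; lia. }
  induction k as [|k IHk]; [f_equal; lia|].
  replace (n + S k * S d) with ((n + k * S d) + S d) by lia.
  rewrite Hstep by lia. exact IHk.
Qed.

Definition in_tail (x : T) : Prop := exists n, pow1 g (S A + n) = Some x.

Lemma in_tail_mul x y : in_tail x -> in_tail y -> in_tail (sg_op T x y).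
Proof.
  intros [i Hi] [j Hj]. exists (S A + i + j).
  rewrite <- mul1_Some, <- Hi, <- Hj, <- pow1_add. f_equal; lia.
Qed.

Lemma in_tail_spow n : in_tail (spow T g (A + n)).
Proof. exists n. reflexivity. Qed.

Definition tail_sg : semigroup := sub_sg T in_tail in_tail_mul _ (in_tail_spow 0).

(* The identity is g^(A+1)(d+1) and the inverse of g^(A+1+i) is g^(A+1+j) with
   j = (A+1+i) d + (A+1) d. *)
Lemma tail_is_group : is_group tail_sg.
Proof.
  set (e := spow T g (A + S A * d)).
  assert (Hpe : pow1 g (S A + S A * d) = Some e) by reflexivity.
  exists (exist _ e (in_tail_spow _)). split.
  - intros [x [i Hi]].
    assert (E : Some (sg_op T e x) = Some x).
    { rewrite <- mul1_Some, <- Hi, <- Hpe, <- pow1_add.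
      replace (S A + S A * d + (S A + i)) with (S A + i + S A * S d) by nia.
      apply pow1_periodic. lia. }
    injection E as E. split; apply sig_ext; simpl; [exact E|rewrite Tcomm; exact E].
  - intros [x [i Hi]].
    set (j := (S A + i) * d + S A * d).
    exists (exist _ _ (in_tail_spow j)).
    assert (E : Some (sg_op T x (spow T g (A + j))) = Some e).
    { rewrite <- mul1_Some, <- Hi, <- Hpe.
      change (Some (spow T g (A + j))) with (pow1 g (S A + j)). rewrite <- pow1_add.
      replace (S A + i + (S A + j)) with (S A + S A * d + (S A + i) * S d) by (unfold j; nia).
      apply pow1_periodic. lia. }
    injection E as E. split; apply sig_ext; simpl; [exact E|rewrite Tcomm; exact E].
Qed.

Lemma combinatorial_tail_stable V :
  combinatorial V -> inV V T -> pow1 g (S A) = pow1 g (S (S A)).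
Proof.
  intros Hcomb HT.
  assert (Htriv := Hcomb tail_sg (inV_sub_sg _ _ _ _ _ V HT) tail_is_group).
  assert (E := f_equal (@proj1_sig _ _)
                 (Htriv (exist _ _ (in_tail_spow 0)) (exist _ _ (in_tail_spow 1)))).
  simpl in E. rewrite Nat.add_0_r, Nat.add_1_r in E. simpl. f_equal; exact E.
Qed.

End PowerTail.

Lemma combinatorial_pow_stable V : combinatorial V ->
  exists m, forall T, inV V T -> pow_stable T (S m).
Proof.
  intros Hcomb.
  destruct (exists_unbalanced_identity V Hcomb) as [u [v [i [He Hne]]]].
  destruct (unbalanced_spow u v i Hne) as [A [B [HAB Hpow]]].
  assert (Hsat : forall T, inV V T -> forall g : T, pow1 g (S A) = pow1 g (S B)).
  { intros T HT g. simpl. f_equal. exact (Hpow T (proj2 HT _ He) g). }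
  destruct (Nat.lt_total A B) as [Hlt|[Heq|Hlt]]; [|contradiction|].
  - exists A. intros T HT g.
    refine (combinatorial_tail_stable T g A (B - A - 1) (proj1 HT) _ V Hcomb HT).
    rewrite (Hsat T HT g). f_equal. lia.
  - exists B. intros T HT g.
    refine (combinatorial_tail_stable T g B (A - B - 1) (proj1 HT) _ V Hcomb HT).
    rewrite <- (Hsat T HT g). f_equal. lia.
Qed.

Lemma exists_frontier (Q : nat -> Prop) n : Q 0 -> ~ Q n -> exists k, Q k /\ ~ Q (S k).
Proof.
  intros H0 Hn. induction n as [|n IHn]; [contradiction|].
  destruct (classic (Q n)) as [Hq|Hq]; [exists n; auto|auto].
Qed.

Lemma idempotent_pow_stable V m k T : pow_stable T (S m) ->
  ~ inV V (cyclic_monoid (S k)) -> inV V T ->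
  forall f s : T, sg_op T f f = f -> mul1 (Some f) (pow1 s k) = mul1 (Some f) (pow1 s (S k)).
Proof.
  intros Hst HN HT f s Hf. apply NNPP; intros Hsep. apply HN.
  split; [apply cyclic_monoid_comm|]. intros [u v] He.
  apply (proj2 (Cvar_satisfies_iff (S k) u v)); [|apply cyclic_monoid_in_Cvar].
  intros i. apply (mul1_pow1_eq_min T (Some f) s (S m) k); [apply Hst|exact Hsep|].
  rewrite <- !(mul1_eval_word_idempotent T (proj1 HT) f s i) by exact Hf.
  f_equal. f_equal. apply (proj2 HT _ He).
Qed.

Section ReesQuotient.
Variable T : semigroup.
Hypothesis Tcomm : commutative_sg T.

(* In a commutative semigroup this is the ideal generated by the idempotents. *)
Definition in_idem_ideal (x : T) : Prop := exists f, sg_op T f f = f /\ sg_op T x f = x.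

Lemma in_idem_ideal_mulr x y : in_idem_ideal x -> in_idem_ideal (sg_op T x y).
Proof.
  intros [f [Hf Hx]]. exists f; split; [exact Hf|].
  rewrite <- sg_assoc, (Tcomm y f), sg_assoc, Hx. reflexivity.
Qed.

Lemma in_idem_ideal_mull x y : in_idem_ideal y -> in_idem_ideal (sg_op T x y).
Proof. intros H. rewrite Tcomm. apply in_idem_ideal_mulr, H. Qed.

(* The Rees quotient by the ideal: [None] is its zero, [Some x] a class outside it. *)
Definition rees_class (x : T) : option T :=
  if excluded_middle_informative (in_idem_ideal x) then None else Some x.

Lemma rees_class_ideal x : in_idem_ideal x -> rees_class x = None.
Proof. unfold rees_class; destruct (excluded_middle_informative _); tauto. Qed.

Lemma rees_class_not_ideal x : ~ in_idem_ideal x -> rees_class x = Some x.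
Proof. unfold rees_class; destruct (excluded_middle_informative _); tauto. Qed.

Definition rees_ok (o : option T) : Prop :=
  match o with None => True | Some x => ~ in_idem_ideal x end.

Lemma rees_class_ok x : rees_ok (rees_class x).
Proof. unfold rees_class; destruct (excluded_middle_informative _); simpl; auto. Qed.

Definition rees_mul (a b : option T) : option T :=
  match a, b with Some x, Some y => rees_class (sg_op T x y) | _, _ => None end.

Lemma rees_mul_ok a b : rees_ok (rees_mul a b).
Proof. destruct a, b; simpl; auto. apply rees_class_ok. Qed.

Lemma rees_mul_assoc a b c : rees_mul a (rees_mul b c) = rees_mul (rees_mul a b) c.
Proof.
  destruct a as [x|], b as [y|], c as [z|]; simpl; auto.
  - destruct (classic (in_idem_ideal (sg_op T y z))) as [Hyz|Hyz];
      destruct (classic (in_idem_ideal (sg_op T x y))) as [Hxy|Hxy].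
    + rewrite (rees_class_ideal _ Hyz), (rees_class_ideal _ Hxy). reflexivity.
    + rewrite (rees_class_ideal _ Hyz), (rees_class_not_ideal _ Hxy). simpl.
      rewrite rees_class_ideal; [reflexivity|].
      rewrite <- sg_assoc. apply in_idem_ideal_mull, Hyz.
    + rewrite (rees_class_not_ideal _ Hyz), (rees_class_ideal _ Hxy). simpl.
      rewrite rees_class_ideal; [reflexivity|].
      rewrite sg_assoc. apply in_idem_ideal_mulr, Hxy.
    + rewrite (rees_class_not_ideal _ Hyz), (rees_class_not_ideal _ Hxy). simpl.
      rewrite sg_assoc. reflexivity.
  - destruct (rees_class (sg_op T x y)); reflexivity.
Qed.

Definition rees_op (a b : {o | rees_ok o}) : {o | rees_ok o} :=
  exist _ (rees_mul (proj1_sig a) (proj1_sig b)) (rees_mul_ok _ _).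

Lemma rees_op_assoc a b c : rees_op a (rees_op b c) = rees_op (rees_op a b) c.
Proof. apply sig_ext; simpl. apply rees_mul_assoc. Qed.

Definition rees_sg : semigroup :=
  Semigroup {o | rees_ok o} rees_op rees_op_assoc (exist rees_ok None I).

Lemma rees_comm : commutative_sg rees_sg.
Proof.
  intros [[x|] Hx] [[y|] Hy]; apply sig_ext; simpl; auto. rewrite Tcomm. reflexivity.
Qed.

Definition rees_proj (x : T) : rees_sg := exist rees_ok (rees_class x) (rees_class_ok x).

Lemma rees_proj_mul x y : rees_proj (sg_op T x y) = sg_op rees_sg (rees_proj x) (rees_proj y).
Proof.
  apply sig_ext; simpl.
  destruct (classic (in_idem_ideal x)) as [Hx|Hx].
  { rewrite (rees_class_ideal x Hx), rees_class_ideal; [reflexivity|].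
    apply in_idem_ideal_mulr, Hx. }
  destruct (classic (in_idem_ideal y)) as [Hy|Hy].
  { rewrite (rees_class_ideal y Hy), rees_class_ideal by (apply in_idem_ideal_mull, Hy).
    destruct (rees_class x); reflexivity. }
  rewrite (rees_class_not_ideal x Hx), (rees_class_not_ideal y Hy). reflexivity.
Qed.

Lemma rees_proj_eval (h : nat -> T) w :
  rees_proj (eval_word T h w) = eval_word rees_sg (fun i => rees_proj (h i)) w.
Proof.
  unfold eval_word. generalize (h (fst w)) as a.
  induction (snd w) as [|x l IHl]; intros a; simpl; [reflexivity|].
  rewrite <- rees_proj_mul. apply IHl.
Qed.

(* Outside the ideal classes are singletons. Inside, with x e = x and y e' = y,
   y = x e' forces y e = y, whence x = e x = e y = y. *)
Lemma eq_of_rees_proj_eq x y : rees_proj x = rees_proj y ->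
  (forall f, sg_op T f f = f -> sg_op T f x = sg_op T f y) -> x = y.
Proof.
  intros Hr Hf. apply (f_equal (@proj1_sig _ _)) in Hr. simpl in Hr.
  destruct (classic (in_idem_ideal x)) as [Hx|Hx];
    destruct (classic (in_idem_ideal y)) as [Hy|Hy].
  - destruct Hx as [e [He Hxe]], Hy as [e' [He' Hye']].
    assert (Hy_eq : y = sg_op T x e').
    { rewrite <- Hye' at 1. rewrite Tcomm, <- (Hf e' He'). apply Tcomm. }
    assert (Hye : sg_op T y e = y).
    { rewrite Hy_eq, <- sg_assoc, (Tcomm e' e), sg_assoc, Hxe. reflexivity. }
    rewrite <- Hxe, Tcomm, (Hf e He), Tcomm. exact Hye.
  - rewrite (rees_class_ideal x Hx), (rees_class_not_ideal y Hy) in Hr. discriminate.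
  - rewrite (rees_class_not_ideal x Hx), (rees_class_ideal y Hy) in Hr. discriminate.
  - rewrite (rees_class_not_ideal x Hx), (rees_class_not_ideal y Hy) in Hr.
    now injection Hr.
Qed.

Variable z : T.
Hypothesis z_ideal : in_idem_ideal z.

Lemma rees_proj_surj (r : rees_sg) : exists x, rees_proj x = r.
Proof.
  destruct r as [[x|] Hr].
  - exists x. apply sig_ext. apply rees_class_not_ideal, Hr.
  - exists z. apply sig_ext. apply rees_class_ideal, z_ideal.
Qed.

Lemma rees_satisfies_lift u v :
  (forall h : nat -> T, rees_proj (eval_word T h u) = rees_proj (eval_word T h v)) ->
  satisfies rees_sg (u, v).
Proof.
  intros H h. cbn [fst snd].
  destruct (choice _ (fun i => rees_proj_surj (h i))) as [h' Hh'].
  replace h with (fun i => rees_proj (h' i)) by (apply functional_extensionality; auto).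
  rewrite <- !rees_proj_eval. apply H.
Qed.

End ReesQuotient.

Lemma spow_idempotent (T : semigroup) m : pow_stable T (S m) ->
  forall a : T, sg_op T (spow T a m) (spow T a m) = spow T a m.
Proof.
  intros Hst a.
  assert (E := pow1_stable T a (S m) (Hst a) (S m + S m) ltac:(lia)).
  rewrite pow1_add in E. now injection E.
Qed.

(* x_0^(m+1) x_1 = x_0^(m+1), the word (0, repeat 0 m) being x_0^(m+1). *)
Definition nil_subvariety (V : cvariety) (m : nat) : cvariety :=
  fun e => V e \/ e = (word_app (0, repeat 0 m) (1, []), (0, repeat 0 m)).

Lemma nil_subvariety_nil V m : nil_variety (nil_subvariety V m).
Proof.
  intros T [Hc HT].
  assert (Hz : forall a b : T, sg_op T (spow T a m) b = spow T a m).
  { intros a b. specialize (HT _ (or_intror eq_refl) (fun i => match i with 0 => a | _ => b end)).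
    cbn [fst snd] in HT. rewrite eval_word_app, !eval_word_pow in HT. exact HT. }
  exists (spow T (sg_inh T) m). split.
  - intros x. split; [apply Hz|]. rewrite Hc. apply Hz.
  - intros x. exists m. rewrite <- (Hz x (spow T (sg_inh T) m)), Hc. apply Hz.
Qed.

Lemma rees_in_nil_subvariety V m T (HT : inV V T) : pow_stable T (S m) ->
  inV (nil_subvariety V m) (rees_sg T (proj1 HT)).
Proof.
  intros Hst.
  assert (Hpow_ideal : forall a, in_idem_ideal T (spow T a m))
    by (intros a; exists (spow T a m); split; apply spow_idempotent, Hst).
  split; [apply rees_comm|]. intros e [He| ->].
  - destruct e as [u v]. apply (rees_satisfies_lift T _ _ (Hpow_ideal (sg_inh T))).
    intros h. f_equal. exact (proj2 HT _ He h).
  - apply (rees_satisfies_lift T _ _ (Hpow_ideal (sg_inh T))). intros h.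
    rewrite eval_word_app, eval_word_pow. apply sig_ext; cbn [proj1_sig rees_proj].
    rewrite !rees_class_ideal; [reflexivity|apply Hpow_ideal|].
    apply in_idem_ideal_mulr; [exact (proj1 HT)|apply Hpow_ideal].
Qed.

Lemma nil_subvariety_join_Cvar V m k :
  (forall T, inV V T -> pow_stable T (S m)) ->
  inV V (cyclic_monoid k) -> ~ inV V (cyclic_monoid (S k)) ->
  veq V (vjoin (nil_subvariety V m) (Cvar k)).
Proof.
  intros Hst Hk HSk T. split.
  - intros HT. split; [exact (proj1 HT)|]. intros [u v] [HY HC] h. cbn [fst snd].
    apply (eq_of_rees_proj_eq T (proj1 HT)).
    + rewrite !rees_proj_eval.
      exact (HY _ (rees_in_nil_subvariety V m T HT (Hst T HT)) _).
    + apply (idempotent_mul_eval_congr T (proj1 HT) k u v).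
      * exact (idempotent_pow_stable V m k T (Hst T HT) HSk HT).
      * exact (proj1 (Cvar_satisfies_iff k u v) HC).
  - intros HT. split; [exact (proj1 HT)|]. intros e He. apply (proj2 HT). split.
    + intros R HR. exact (proj2 HR e (or_introl He)).
    + destruct e as [u v]. apply (Cvar_satisfies_iff k u v).
      apply occ_min_of_cyclic_monoid, (proj2 Hk _ He).
Qed.

Theorem mainTheorem7 (V : cvariety) :
  (exists m : nat, veq V (Cvar m)) <->
  (combinatorial V /\
   forall Y Z : cvariety, nil_variety Y -> veq V (vjoin Y Z) -> veq V Z).
Proof.
  split.
  - intros [m HV]. split.
    + intros T HT. apply (Cvar_combinatorial m), HV, HT.
    + intros Y Z. exact (join_nil_Cvar V m Y Z HV).
  - intros [Hcomb Hjoin].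
    destruct (combinatorial_pow_stable V Hcomb) as [m Hm].
    destruct (exists_frontier (fun j => inV V (cyclic_monoid j)) (S (S m)))
      as [k [Hk HSk]].
    + apply inV_trivial, cyclic_monoid0_trivial.
    + intros HN. exact (cyclic_monoid_not_pow_stable m (Hm _ HN)).
    + exists k. apply (Hjoin (nil_subvariety V m)).
      * apply nil_subvariety_nil.
      * apply nil_subvariety_join_Cvar; assumption.
Qed.
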